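(* Let $\Bbbk$ be a field of characteristic $0$, $n\ge2$, and let $(A,\mu,\alpha)$ be a multiplicative $n$-ary totally Hom-associative algebra over $\Bbbk$. Define $(2^k(n-1)+1)$-ary products $\mu^{(k)}$ inductively by $\mu^{(0)}=\mu$ and, for $k\ge1$, with $N_{k-1}=2^{k-1}(n-1)+1$ and $N_k=2^k(n-1)+1$, $\mu^{(k)}(a_1,\ldots,a_{N_k})=\mu^{(k-1)}\big(\mu^{(k-1)}(a_1,\ldots,a_{N_{k-1}}),\alpha^{2^{k-1}}(a_{N_{k-1}+1}),\ldots,\alpha^{2^{k-1}}(a_{N_k})\big)$. Then for each $k\ge0$, $A^k=(A,\mu^{(k)},\alpha^{2^k})$ (all twisting maps equal to $\alpha^{2^k}$) is a multiplicative $(2^k(n-1)+1)$-ary totally Hom-associative algebra.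
   Context: An $m$-ary Hom-algebra $(V,\mu,(\alpha_1,\ldots,\alpha_{m-1}))$ is a vector space $V$ with an $m$-linear map $\mu$ (written $\mu(a_1,\ldots,a_m)=(a_1\cdots a_m)$) and linear maps $\alpha_i\colon V\to V$. It is multiplicative if all $\alpha_i$ equal one map $\alpha$ and $\alpha\circ\mu=\mu\circ\alpha^{\otimes m}$. It is $m$-ary totally Hom-associative if for every $i\in\{1,\ldots,m-1\}$ and all $a_1,\ldots,a_{2m-1}$: $(\alpha_1(a_1),\ldots,\alpha_{i-1}(a_{i-1}),(a_i\cdots a_{i+m-1}),\alpha_i(a_{i+m}),\ldots,\alpha_{m-1}(a_{2m-1}))=(\alpha_1(a_1),\ldots,\alpha_i(a_i),(a_{i+1}\cdots a_{i+m}),\alpha_{i+1}(a_{i+m+1}),\ldots,\alpha_{m-1}(a_{2m-1}))$. *)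

From HB Require Import structures.
From mathcomp Require Import all_boot all_order all_algebra.
Set Implicit Arguments. Unset Strict Implicit. Unset Printing Implicit Defensive.
Import GRing.Theory.
Local Open Scope ring_scope.

Section HomAlg.
Variables (K : fieldType) (V : lmodType K).

(* Extension of a finite family of arguments a_0..a_{P-1} to a nat-indexed
   sequence (padded with 0, never read beyond P-1 below). *)
Definition ext (P : nat) (a : 'I_P -> V) : nat -> V :=
  fun i => match insub i with Some j => a j | None => 0 end.

Definition multilinear (m : nat) (mu : ('I_m -> V) -> V) : Prop :=
  forall (i : 'I_m) (a : 'I_m -> V) (c : K) (x y : V),
    mu (fun j => if j == i then c *: x + y else a j)
    = c *: mu (fun j => if j == i then x else a j)
      + mu (fun j => if j == i then y else a j).

Definition lin_map (f : V -> V) : Prop :=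
  forall (c : K) (x y : V), f (c *: x + y) = c *: f x + f y.

Definition hom_algebra (m : nat) (mu : ('I_m -> V) -> V) (alpha : V -> V) : Prop :=
  multilinear mu /\ lin_map alpha.

Definition multiplicative (m : nat) (mu : ('I_m -> V) -> V) (alpha : V -> V) :=
  forall a : 'I_m -> V, alpha (mu a) = mu (fun j => alpha (a j)).

(* The bracketing with the inner product at 0-based position p:
   (alpha(b_0),...,alpha(b_{p-1}), (b_p ... b_{p+m-1}), alpha(b_{p+m}),...,alpha(b_{2m-2})) *)
Definition assoc_at (m : nat) (mu : ('I_m -> V) -> V) (alpha : V -> V)
    (p : nat) (b : nat -> V) : V :=
  mu (fun j : 'I_m =>
        if (j < p)%N then alpha (b j)
        else if j == p :> nat then mu (fun l : 'I_m => b (p + l)%N)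
        else alpha (b (j + m - 1)%N)).

(* m-ary totally Hom-associative (all twisting maps equal to alpha):
   for every i in {1,...,m-1} (0-based p = i-1) the two bracketings agree. *)
Definition total_hom_assoc (m : nat) (mu : ('I_m -> V) -> V) (alpha : V -> V) : Prop :=
  forall (p : nat), (p.+1 < m)%N ->
  forall a : 'I_(2 * m - 1) -> V,
    assoc_at mu alpha p (ext a) = assoc_at mu alpha p.+1 (ext a).

Definition mult_total_hom_assoc_algebra (m : nat) (mu : ('I_m -> V) -> V)
    (alpha : V -> V) : Prop :=
  [/\ hom_algebra mu alpha, multiplicative mu alpha & total_hom_assoc mu alpha].

Definition arity (n k : nat) : nat := (2 ^ k * (n - 1) + 1)%N.

(* mu^(k) acting on a nat-indexed sequence of arguments (reads only indices
   < arity n k):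
   mu^(0) = mu,
   mu^(k+1)(a) = mu^(k)(mu^(k)(a_0..a_{N_k-1}), alpha^{2^k}(a_{N_k}),...,alpha^{2^k}(a_{2N_k-2})) *)
Fixpoint muS (n : nat) (mu : ('I_n -> V) -> V) (alpha : V -> V) (k : nat)
    (a : nat -> V) : V :=
  match k with
  | 0 => mu (fun j : 'I_n => a j)
  | k'.+1 =>
      muS mu alpha k' (fun j => if j == 0%N then muS mu alpha k' a
                                else iter (2 ^ k') alpha (a (arity n k' - 1 + j)%N))
  end.

Definition mu_k (n : nat) (mu : ('I_n -> V) -> V) (alpha : V -> V) (k : nat)
    : ('I_(arity n k) -> V) -> V :=
  fun a => muS mu alpha k (ext a).

End HomAlg.
Arguments mu_k {K V n} mu alpha k _.
Arguments muS {K V n} mu alpha k a.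

(* Write [lprod r] for the left-normed composite of [r] copies of [mu], the
   arguments entering at the (i+1)-st multiplication being twisted by alpha^i;
   it has arity r(m-1)+1, and mu^(k) is [lprod (2^k)].  Total Hom-associativity
   lets an inner product at any position of [mu] be moved to the front; by
   induction this shows that substituting [lprod s] at any argument position of
   [lprod r], the other arguments being twisted by alpha^s, yields
   [lprod (r + s)].  Every bracketing in the associativity condition for mu^(k)
   is such a substitution with r = s = 2^k, so all of them equal
   [lprod (2^(k+1))]. *)

From Pilot Require Import Defs.
From mathcomp Require Import all_boot all_order all_algebra.
From mathcomp Require Import zify.
From Stdlib Require Import FunctionalExtensionality.
Set Implicit Arguments. Unset Strict Implicit.

Lemma iter_iterC (T : Type) (f : T -> T) a b x :
  iter a f (iter b f x) = iter b f (iter a f x).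
Proof. by rewrite -!iterD addnC. Qed.

Lemma lin_map_iter (K : fieldType) (V : lmodType K) (alpha : V -> V) t :
  lin_map alpha -> lin_map (iter t alpha).
Proof. by move=> alpha_lin; elim: t => [|t IH] c x y //=; rewrite IH alpha_lin. Qed.

Section Sequences.
Variables (K : fieldType) (V : lmodType K).

Definition upd (x : nat -> V) (i : nat) (v : V) : nat -> V :=
  fun k => if k == i then v else x k.

Lemma ext_ord P (a : 'I_P -> V) i (iP : (i < P)%N) : ext a i = a (Ordinal iP).
Proof. by rewrite /ext; case: insubP => [j _ ji|]; [congr a; apply: val_inj | rewrite iP]. Qed.

Lemma ext_val P (b : nat -> V) i : (i < P)%N -> ext (fun j : 'I_P => b j) i = b i.
Proof. by move=> iP; rewrite (ext_ord _ iP). Qed.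

Lemma ext_upd P (a : 'I_P -> V) (i : 'I_P) v :
  ext (fun j => if j == i then v else a j) = upd (ext a) i v.
Proof.
apply: functional_extensionality => k; rewrite /ext /upd.
case: insubP => [j _ <- //|kP]; case: eqP => // ki.
by move: kP; rewrite ki ltn_ord.
Qed.
End Sequences.

Section LeftNormedProducts.
Variables (K : fieldType) (V : lmodType K) (m : nat).
Variables (mu : ('I_m -> V) -> V) (alpha : V -> V).

Definition mu_seq (x : nat -> V) : V := mu (fun j : 'I_m => x j).

Fixpoint lprod (r : nat) (x : nat -> V) : V :=
  match r with
  | 0 => x 0%N
  | r'.+1 => mu_seq (fun k => if k == 0%N then lprod r' x
                              else iter r' alpha (x (r' * (m - 1) + k)%N))
  end.

Definition lprod_args (r : nat) (x : nat -> V) : nat -> V :=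
  fun k => if k == 0%N then lprod r x else iter r alpha (x (r * (m - 1) + k)%N).

Definition shift (p : nat) (b : nat -> V) : nat -> V := fun l => b (p + l)%N.

(* The arguments (g b_0, ..., g b_(p-1), F, g b_(p+L), g b_(p+L+1), ...):
   [F] stands for a product of the [L] arguments b_p, ..., b_(p+L-1). *)
Definition bracket (p L : nat) (g : V -> V) (F : V) (b : nat -> V) : nat -> V :=
  fun k => if (k < p)%N then g (b k) else if k == p then F else g (b (k + L - 1)%N).

Lemma lprodS r x : lprod r.+1 x = mu_seq (lprod_args r x).
Proof. by []. Qed.

Lemma mu_seq_congr (x y : nat -> V) :
  (forall k, (k < m)%N -> x k = y k) -> mu_seq x = mu_seq y.
Proof. by move=> xy; congr mu; apply: functional_extensionality => j; apply: xy. Qed.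

Lemma lprod_congr r (x y : nat -> V) :
  (forall k, (k <= r * (m - 1))%N -> x k = y k) -> lprod r x = lprod r y.
Proof.
elim: r x y => [|r IH] x y xy /=; first exact: xy.
apply: mu_seq_congr => k km; case: eqP => [_|k0].
  by apply: IH => i Hi; apply: xy; lia.
by rewrite xy //; lia.
Qed.

Lemma lprodD a b y : lprod a (lprod_args b y) = lprod (a + b) y.
Proof.
elim: a => [|a IH] //=; rewrite IH; apply: mu_seq_congr => k km.
case: eqP => // /eqP k0; rewrite /lprod_args ifN; last by nia.
by rewrite iterD mulnDl; do 3 f_equal; nia.
Qed.

Lemma assoc_atE p b :
  assoc_at mu alpha p b = mu_seq (bracket p m alpha (mu_seq (shift p b)) b).
Proof. by []. Qed.

Lemma assoc_at_congr p (b b' : nat -> V) : (p < m)%N ->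
  (forall k, (k < 2 * m - 1)%N -> b k = b' k) ->
  assoc_at mu alpha p b = assoc_at mu alpha p b'.
Proof.
move=> pm bb'; rewrite !assoc_atE; apply: mu_seq_congr => k km; rewrite /bracket.
case: ltnP => kp; first by rewrite bb' //; lia.
case: eqP => kp'; last by rewrite bb' //; lia.
by apply: mu_seq_congr => l lm; rewrite /shift bb' //; lia.
Qed.

Lemma lprod_args_upd_head r x i Z : (i <= r * (m - 1))%N ->
  lprod_args r (upd x i Z) = upd (lprod_args r x) 0 (lprod r (upd x i Z)).
Proof.
move=> ir; apply: functional_extensionality => k; rewrite /lprod_args /upd.
by case: eqP => // /eqP k0; rewrite ifN //; nia.
Qed.

Lemma lprod_args_upd_tail r x i Z : (r * (m - 1) < i)%N ->
  lprod_args r (upd x i Z) = upd (lprod_args r x) (i - r * (m - 1)) (iter r alpha Z).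
Proof.
move=> ri; apply: functional_extensionality => k; rewrite /lprod_args /upd.
case: eqP => [->|/eqP k0].
  rewrite ifN; last by nia.
  by apply: lprod_congr => j jr; rewrite ifN //; nia.
have [->|/negbTE ki] := eqVneq k (i - r * (m - 1)); first by rewrite subnKC ?eqxx // ltnW.
by rewrite ifF //; apply/negbTE; nia.
Qed.

Hypothesis mu_lin : multilinear mu.

Lemma mu_seq_linear i x c (X Y : V) : (i < m)%N ->
  mu_seq (upd x i (c *: X + Y)%R) = (c *: mu_seq (upd x i X) + mu_seq (upd x i Y))%R.
Proof. by move=> im; exact: (mu_lin (Ordinal im) (fun j => x j)). Qed.

Hypothesis mu_mult : Defs.multiplicative mu alpha.

Lemma iter_lprod t r x :
  iter t alpha (lprod r x) = lprod r (fun k => iter t alpha (x k)).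
Proof.
have iter_mu_seq y : iter t alpha (mu_seq y) = mu_seq (fun k => iter t alpha (y k)).
  by elim: t => [|t IH] //=; rewrite IH /mu_seq mu_mult.
elim: r x => [|r IH] x //=; rewrite iter_mu_seq; apply: mu_seq_congr => k _.
by case: eqP => _ //; rewrite iter_iterC.
Qed.

Hypothesis mu_assoc : total_hom_assoc mu alpha.

Lemma total_hom_assoc_seq p (v : nat -> V) : (p.+1 < m)%N ->
  assoc_at mu alpha p v = assoc_at mu alpha p.+1 v.
Proof.
move=> pm; have ext_v k : (k < 2 * m - 1)%N -> ext (fun j : 'I_(2 * m - 1) => v j) k = v k.
  exact: ext_val.
rewrite -(assoc_at_congr _ ext_v); last by lia.
by rewrite mu_assoc // (assoc_at_congr _ ext_v).
Qed.

Lemma mu_seq_bracket_mu i (v : nat -> V) : (i < m)%N ->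
  mu_seq (bracket i m alpha (mu_seq (shift i v)) v) = mu_seq (bracket 0 m alpha (mu_seq v) v).
Proof.
elim: i => [//|i IH] im.
by rewrite -assoc_atE -total_hom_assoc_seq // assoc_atE IH //; lia.
Qed.

Hypotheses (m_gt0 : (0 < m)%N) (alpha_lin : lin_map alpha).

Lemma lprod_linear r i x c (X Y : V) :
  (i <= r * (m - 1))%N ->
  lprod r (upd x i (c *: X + Y)%R) = (c *: lprod r (upd x i X) + lprod r (upd x i Y))%R.
Proof.
elim: r i => [|r IH] i ir.
  by move: ir; rewrite mul0n leqn0 => /eqP ->; rewrite /= /upd eqxx.
rewrite !lprodS; have [ir'|ri] := leqP i (r * (m - 1)).
  by rewrite !lprod_args_upd_head // IH // mu_seq_linear.
by rewrite !lprod_args_upd_tail // lin_map_iter // mu_seq_linear //; nia.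
Qed.

Lemma mu_seq_bracket_lprod s i x : (i < m)%N ->
  mu_seq (bracket i (s * (m - 1) + 1) (iter s alpha) (lprod s (shift i x)) x) = lprod s.+1 x.
Proof.
elim: s i x => [|s IH] i x im.
  apply: mu_seq_congr => k km; rewrite /bracket /shift /=.
  by repeat case: ifP => /= ?; try (f_equal; lia).
(* Split off the last multiplication of the inserted product, leaving the
   bracketing [v] of level [s], then move that multiplication to the front. *)
set v := bracket i (s * (m - 1) + 1) (iter s alpha) (lprod s (shift i x)) x.
transitivity (mu_seq (bracket i m alpha (mu_seq (shift i v)) v)).
  apply: mu_seq_congr => k km; rewrite /v /bracket.
  case: ifP => // ki; case: ifP => ki'.
    rewrite lprodS; apply: mu_seq_congr => l lm; rewrite /shift /lprod_args.
    case: eqP => [->|l0]; first by rewrite addn0 ltnn eqxx.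
    rewrite ifF; last by lia.
    rewrite ifF; last by apply/eqP; lia.
    by do 2 f_equal; nia.
  rewrite ifF; last by lia.
  rewrite ifF; last by apply/eqP; lia.
  by rewrite /=; do 3 f_equal; nia.
rewrite mu_seq_bracket_mu // lprodS; apply: mu_seq_congr => k km; rewrite /lprod_args {1}/bracket.
case: eqP => [->|k0]; first by rewrite /v IH.
rewrite ltn0 /v /bracket ifF; last by lia.
rewrite ifF; last by apply/eqP; lia.
by rewrite iterS; do 3 f_equal; nia.
Qed.

Lemma lprod_bracket_lprod r s j y : (j <= r * (m - 1))%N ->
  lprod r (bracket j (s * (m - 1) + 1) (iter s alpha) (lprod s (shift j y)) y) = lprod (r + s) y.
Proof.
elim: r j y => [|r IH] j y jr.
  move: jr; rewrite mul0n leqn0 => /eqP ->.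
  by rewrite /= /bracket ltnn eqxx.
rewrite addSn !lprodS; have [jq|qj] := leqP j (r * (m - 1)).
  apply: mu_seq_congr => k km; rewrite /lprod_args; case: eqP => [_|/eqP k0]; first exact: IH.
  rewrite /bracket ifF; last by nia.
  rewrite ifF; last by apply/negbTE; nia.
  by rewrite iterD; do 3 f_equal; nia.
(* [j] is the argument at position [t] of the outermost multiplication. *)
set t := j - r * (m - 1); set u := lprod_args r y.
transitivity (mu_seq (bracket t (s * (m - 1) + 1) (iter s alpha) (lprod s (shift t u)) u)).
  apply: mu_seq_congr => k km; rewrite /u /lprod_args /bracket /shift.
  case: eqP => [->|/eqP k0].
    rewrite ifT; last by nia.
    by rewrite iter_lprod //; apply: lprod_congr => i ir; rewrite ifT //; nia.
  have [kt|tk|->] := ltngtP k t.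
  - rewrite ifT; last by nia.
    exact: iter_iterC.
  - rewrite ifF; last by nia.
    rewrite ifF; last by apply/negbTE; nia.
    rewrite ifN; last by nia.
    by rewrite iter_iterC; do 3 f_equal; nia.
  - rewrite ifF; last by nia.
    rewrite ifT; last by apply/eqP; nia.
    rewrite iter_lprod //; congr lprod; apply: functional_extensionality => l.
    rewrite ifN; last by nia.
    by do 2 f_equal; nia.
rewrite mu_seq_bracket_lprod //; last by nia.
by rewrite lprodD addSn addnC.
Qed.
End LeftNormedProducts.

Section IteratedProducts.
Variables (K : fieldType) (V : lmodType K) (n : nat).
Variables (mu : ('I_n -> V) -> V) (alpha : V -> V).
Hypothesis n_gt0 : (0 < n)%N.
Hypotheses (mu_lin : multilinear mu) (alpha_lin : lin_map alpha).
Hypotheses (mu_mult : Defs.multiplicative mu alpha) (mu_assoc : total_hom_assoc mu alpha).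

Lemma muS_lprod k x : muS mu alpha k x = lprod mu alpha (2 ^ k) x.
Proof.
elim: k x => [|k IH] x; first by apply: mu_seq_congr => j _; case: eqP => [->|].
rewrite /= !IH expnS mul2n -addnn -lprodD; apply: lprod_congr => j _.
by rewrite /arity addnK.
Qed.

Lemma ltn_arity k i : (i < arity n k)%N = (i <= 2 ^ k * (n - 1))%N.
Proof. by rewrite /arity addn1 ltnS. Qed.

Lemma mu_seq_mu_k k x : mu_seq (mu_k mu alpha k) x = lprod mu alpha (2 ^ k) x.
Proof.
rewrite /mu_seq /mu_k muS_lprod; apply: lprod_congr => i ik.
by rewrite ext_val // ltn_arity.
Qed.

Lemma mu_k_multilinear k : multilinear (mu_k mu alpha k).
Proof.
move=> i a c x y; rewrite /mu_k !muS_lprod !ext_upd.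
by apply: lprod_linear; rewrite // -ltn_arity.
Qed.

Lemma mu_k_multiplicative k : Defs.multiplicative (mu_k mu alpha k) (iter (2 ^ k) alpha).
Proof.
move=> a; rewrite /mu_k !muS_lprod iter_lprod //; apply: lprod_congr => i ik.
have iP : (i < arity n k)%N by rewrite ltn_arity.
by rewrite !(ext_ord _ iP).
Qed.

Lemma assoc_at_mu_k k p b : (p < arity n k)%N ->
  assoc_at (mu_k mu alpha k) (iter (2 ^ k) alpha) p b = lprod mu alpha (2 ^ k + 2 ^ k) b.
Proof.
move=> pk; rewrite assoc_atE !mu_seq_mu_k.
by apply: lprod_bracket_lprod; rewrite // -ltn_arity.
Qed.

Lemma mu_k_total_hom_assoc k : total_hom_assoc (mu_k mu alpha k) (iter (2 ^ k) alpha).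
Proof. by move=> p pk a; rewrite !assoc_at_mu_k // ltnW. Qed.
End IteratedProducts.

Local Open Scope ring_scope.

Theorem corollary3p2 (K : fieldType) (V : lmodType K) (n : nat)
    (mu : ('I_n -> V) -> V) (alpha : V -> V) :
  [pchar K] =i pred0 ->
  (2 <= n)%N ->
  mult_total_hom_assoc_algebra mu alpha ->
  forall k : nat,
    mult_total_hom_assoc_algebra (mu_k mu alpha k) (iter (2 ^ k) alpha).
Proof.
move=> _ n_ge2 [[mu_lin alpha_lin] mu_mult mu_assoc] k.
have n_gt0 : (0 < n)%N by apply: ltnW.
split; first split.
- exact: mu_k_multilinear.
- exact: lin_map_iter.
- exact: mu_k_multiplicative.
- exact: mu_k_total_hom_assoc.
Qed.
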